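(* Let $N\ge 1$ be an integer and $\lambda>0$, $\beta>0$, $\alpha>1$ real. For each positive divisor $m$ of $N$ put $c=N/m$, $$\mathbb{E}[T_{\text{job}}(m)]=\frac{\beta m\alpha}{m\alpha-1},\qquad a(m)=\lambda\,\mathbb{E}[T_{\text{job}}(m)],\qquad P_b(m)=\frac{a(m)^{N/m}/(N/m)!}{\sum_{j=0}^{N/m}a(m)^{j}/j!}.$$ (i) If $\alpha\ge 1.5$, then $P_b(m)$ is increasing in $m$ over the positive divisors $m$ of $N$, and hence attains its minimum at $m=1$ (i.e. $c=N$). (ii) If $\alpha<1.5$ and $N$ is even, then the minimum of $P_b(m)$ over the positive divisors $m$ of $N$ equals $\min\{P_b(1),P_b(2)\}$.
   Context: Model: an edge system has $N$ workers split into $c=N/m$ groups of $m$ workers (replication factor $m$, assumed to divide $N$). Jobs arrive as a Poisson process of rate $\lambda$; each job is replicated to the $m$ workers of a free group, and a job finding all groups busy is blocked. Each worker's service time is Pareto $\mathrm{Pareto}(\beta,\alpha)$ (scale $\beta$, tail index $\alpha>1$, i.e. $\Pr(X>x)=(\beta/x)^\alpha$ for $x\ge\beta$); the job-computing time (minimum of $m$ i.i.d. copies) is $\mathrm{Pareto}(\beta,m\alpha)$ with mean $\frac{\beta m\alpha}{m\alpha-1}$. The system is an M/G/c/c loss queue, so the job-blocking probability is the Erlang B formula $P_b(m)$ above. *)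

From Stdlib Require Import Reals Lra Lia Arith.
Open Scope R_scope.

Definition ETjob (beta alpha : R) (m : nat) : R :=
  beta * INR m * alpha / (INR m * alpha - 1).

Definition load (lam beta alpha : R) (m : nat) : R := lam * ETjob beta alpha m.

Definition erlangB (c : nat) (a : R) : R :=
  (a ^ c / INR (fact c)) / sum_f_R0 (fun j => a ^ j / INR (fact j)) c.

Definition Pb (N : nat) (lam beta alpha : R) (m : nat) : R :=
  erlangB (N / m) (load lam beta alpha m).

(* Reversing the order of summation, 1 / B(c, a) = sum_{k <= c} y^k prod_{i < k} (1 - i/c)
   with y = c/a.  For fixed y each coefficient grows with c and new positive terms appear,
   while for fixed c the sum grows with y; hence B(c1, a1) < B(c2, a2) whenever c1 > c2 and
   the per-group load a1/c1 is at most a2/c2.  With c = N/m the per-group load is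
   lam beta m^2 alpha / (N (m alpha - 1)), and it does not decrease from m1 to m2 > m1 as
   soon as m1 + m2 <= alpha m1 m2.  This holds for every pair of divisors when
   alpha >= 3/2, and for every pair with m1 >= 2 whatever alpha > 1. *)
From Stdlib Require Import Reals Lra Lia Arith.
Open Scope R_scope.

Fixpoint falling (x : R) (k : nat) : R :=
  match k with O => 1 | S k' => falling x k' * (x - INR k') end.

Fixpoint falling_ratio (x : R) (k : nat) : R :=
  match k with O => 1 | S k' => falling_ratio x k' * (1 - INR k' / x) end.

Lemma falling_succ_shift x k : (x + 1) * falling x k = falling (x + 1) (S k).
Proof.
  induction k as [|k IH]; cbn [falling].
  - simpl; ring.
  - rewrite <- Rmult_assoc, IH; cbn [falling]; rewrite S_INR; ring.
Qed.

Lemma falling_eq_pow_mul_ratio x k : x <> 0 -> falling x k = x ^ k * falling_ratio x k.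
Proof.
  intros Hx; induction k as [|k IH]; simpl.
  - ring.
  - rewrite IH; field; exact Hx.
Qed.

Lemma falling_ratio_pos x k : INR k <= x -> 0 < falling_ratio x k.
Proof.
  induction k as [|k IH]; intros Hk; simpl; [lra|].
  rewrite S_INR in Hk.
  assert (Hk0 : 0 <= INR k) by apply pos_INR.
  replace (1 - INR k / x) with ((x - INR k) / x) by (field; lra).
  apply Rmult_lt_0_compat; [apply IH; lra | apply Rdiv_lt_0_compat; lra].
Qed.

Lemma falling_ratio_le_succ x k : INR k <= x -> falling_ratio x k <= falling_ratio (x + 1) k.
Proof.
  induction k as [|k IH]; intros Hk; simpl; [lra|].
  rewrite S_INR in Hk.
  assert (Hk0 : 0 <= INR k) by apply pos_INR.
  assert (Hfactor : 0 <= 1 - INR k / x).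
  { replace (1 - INR k / x) with ((x - INR k) / x) by (field; lra).
    left; apply Rdiv_lt_0_compat; lra. }
  assert (Hfrac_succ : INR k / (x + 1) <= INR k / x).
  { apply Rmult_le_compat_l; [lra|]. apply Rinv_le_contravar; lra. }
  apply Rmult_le_compat; [left; apply falling_ratio_pos; lra | exact Hfactor | apply IH; lra | lra].
Qed.

Definition falling_sum (c : nat) (x : R) : R :=
  sum_f_R0 (fun k => x ^ k * falling (INR c) k) c.

Lemma falling_sum_succ c x :
  falling_sum (S c) x = 1 + INR (S c) * x * falling_sum c x.
Proof.
  unfold falling_sum; rewrite decomp_sum by lia; simpl pred.
  rewrite scal_sum.
  replace (x ^ 0 * falling (INR (S c)) 0) with 1 by (simpl; ring).
  f_equal; apply sum_eq; intros k _.
  rewrite S_INR, <- falling_succ_shift; simpl; ring.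
Qed.

Lemma falling_sum_ge_1 c x : 0 <= x -> 1 <= falling_sum c x.
Proof.
  intros Hx; induction c as [|c IH].
  - unfold falling_sum; simpl; lra.
  - rewrite falling_sum_succ.
    assert (0 <= INR (S c) * x) by (apply Rmult_le_pos; [apply pos_INR | exact Hx]).
    assert (0 <= INR (S c) * x * falling_sum c x) by (apply Rmult_le_pos; lra).
    lra.
Qed.

Lemma sum_exp_partial_eq c a : 0 < a ->
  sum_f_R0 (fun j => a ^ j / INR (fact j)) c = a ^ c / INR (fact c) * falling_sum c (/ a).
Proof.
  intros Ha; induction c as [|c IH].
  - unfold falling_sum; simpl; field.
  - rewrite tech5, IH, falling_sum_succ.
    change (fact (S c)) with (S c * fact c)%nat; rewrite mult_INR.
    assert (INR (S c) <> 0) by (apply not_0_INR; lia).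
    assert (INR (fact c) <> 0) by apply INR_fact_neq_0.
    simpl pow; field; lra.
Qed.

Lemma erlangB_eq_inv_falling_sum c a : 0 < a -> erlangB c a = / falling_sum c (/ a).
Proof.
  intros Ha; unfold erlangB; rewrite sum_exp_partial_eq by exact Ha.
  assert (1 <= falling_sum c (/ a)) by (apply falling_sum_ge_1; left; apply Rinv_0_lt_compat, Ha).
  assert (a ^ c <> 0) by (apply pow_nonzero; lra).
  assert (INR (fact c) <> 0) by apply INR_fact_neq_0.
  field; lra.
Qed.

Definition erlang_recip (c : nat) (y : R) : R :=
  sum_f_R0 (fun k => y ^ k * falling_ratio (INR c) k) c.

Lemma falling_sum_eq_erlang_recip c x : falling_sum c x = erlang_recip c (INR c * x).
Proof.
  destruct c as [|c]; [unfold falling_sum, erlang_recip; simpl; ring|].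
  unfold falling_sum, erlang_recip; apply sum_eq; intros k _.
  rewrite falling_eq_pow_mul_ratio, Rpow_mult_distr by (apply not_0_INR; lia).
  ring.
Qed.

Lemma erlang_recip_le c y y' : 0 <= y <= y' -> erlang_recip c y <= erlang_recip c y'.
Proof.
  intros Hy; apply sum_Rle; intros k Hk.
  apply Rmult_le_compat_r; [|apply pow_incr, Hy].
  left; apply falling_ratio_pos, le_INR, Hk.
Qed.

Lemma erlang_recip_lt_succ c y : 0 < y -> erlang_recip c y < erlang_recip (S c) y.
Proof.
  intros Hy; unfold erlang_recip; rewrite tech5.
  assert (Hcoef : sum_f_R0 (fun k => y ^ k * falling_ratio (INR c) k) c <=
                  sum_f_R0 (fun k => y ^ k * falling_ratio (INR (S c)) k) c).
  { apply sum_Rle; intros k Hk.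
    apply Rmult_le_compat_l; [apply pow_le; lra|].
    rewrite S_INR; apply falling_ratio_le_succ, le_INR, Hk. }
  assert (Hnew : 0 < y ^ S c * falling_ratio (INR (S c)) (S c)).
  { apply Rmult_lt_0_compat; [apply pow_lt, Hy | apply falling_ratio_pos; lra]. }
  lra.
Qed.

Lemma erlang_recip_lt c c' y : (c < c')%nat -> 0 < y -> erlang_recip c y < erlang_recip c' y.
Proof.
  intros Hc Hy; induction Hc as [|c' _ IH].
  - apply erlang_recip_lt_succ, Hy.
  - apply Rlt_trans with (erlang_recip c' y); [exact IH | apply erlang_recip_lt_succ, Hy].
Qed.

Lemma erlangB_lt c1 c2 a1 a2 : (0 < c2)%nat -> (c2 < c1)%nat -> 0 < a1 -> 0 < a2 ->
  INR c2 / a2 <= INR c1 / a1 -> erlangB c1 a1 < erlangB c2 a2.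
Proof.
  intros Hc2 Hc Ha1 Ha2 Hload.
  rewrite !erlangB_eq_inv_falling_sum by assumption.
  assert (1 <= falling_sum c1 (/ a1)) by (apply falling_sum_ge_1; left; apply Rinv_0_lt_compat, Ha1).
  assert (1 <= falling_sum c2 (/ a2)) by (apply falling_sum_ge_1; left; apply Rinv_0_lt_compat, Ha2).
  apply Rinv_lt_contravar; [nra|].
  rewrite !falling_sum_eq_erlang_recip.
  assert (Hy : 0 < INR c2 * / a2).
  { apply Rmult_lt_0_compat; [apply lt_0_INR, Hc2 | apply Rinv_0_lt_compat, Ha2]. }
  apply Rlt_le_trans with (erlang_recip c1 (INR c2 * / a2)).
  - apply erlang_recip_lt; assumption.
  - apply erlang_recip_le; unfold Rdiv in Hload; lra.
Qed.

Lemma load_pos lam beta alpha m : 0 < lam -> 0 < beta -> 1 < alpha -> (0 < m)%nat ->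
  0 < load lam beta alpha m.
Proof.
  intros Hlam Hbeta Halpha Hm; unfold load, ETjob.
  assert (1 <= INR m) by (apply (le_INR 1), Hm).
  assert (0 < INR m * alpha - 1) by nra.
  apply Rmult_lt_0_compat; [exact Hlam|].
  apply Rdiv_lt_0_compat; [|assumption].
  repeat apply Rmult_lt_0_compat; lra.
Qed.

Lemma mul_load_le lam beta alpha m1 m2 : 0 < lam -> 0 < beta -> 1 < alpha ->
  (0 < m1)%nat -> (m1 <= m2)%nat -> INR m1 + INR m2 <= alpha * INR m1 * INR m2 ->
  INR m1 * load lam beta alpha m1 <= INR m2 * load lam beta alpha m2.
Proof.
  intros Hlam Hbeta Halpha Hm1 Hm12 Hsum; unfold load, ETjob.
  assert (1 <= INR m1) by (apply (le_INR 1), Hm1).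
  assert (INR m1 <= INR m2) by (apply le_INR, Hm12).
  set (A := INR m1) in *; set (B := INR m2) in *.
  assert (0 < A * alpha - 1) by nra.
  assert (0 < B * alpha - 1) by nra.
  assert (Hdiff : B * (lam * (beta * B * alpha / (B * alpha - 1))) -
                  A * (lam * (beta * A * alpha / (A * alpha - 1))) =
                  lam * beta * alpha * ((B - A) * (alpha * A * B - A - B))
                  / ((A * alpha - 1) * (B * alpha - 1))) by (field; lra).
  assert (0 <= lam * beta * alpha * ((B - A) * (alpha * A * B - A - B))
               / ((A * alpha - 1) * (B * alpha - 1))).
  { apply Rmult_le_pos.
    - repeat apply Rmult_le_pos; lra.
    - left; apply Rinv_0_lt_compat, Rmult_lt_0_compat; assumption. }
  lra.
Qed.

Lemma INR_div_of_divide m N : (0 < m)%nat -> Nat.divide m N -> INR (N / m) = INR N / INR m.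
Proof.
  intros Hm [z ->].
  rewrite Nat.div_mul by lia; rewrite mult_INR.
  field; apply not_0_INR; lia.
Qed.

Lemma Pb_lt N lam beta alpha m1 m2 : (1 <= N)%nat -> 0 < lam -> 0 < beta -> 1 < alpha ->
  (0 < m1)%nat -> Nat.divide m1 N -> Nat.divide m2 N -> (m1 < m2)%nat ->
  INR m1 + INR m2 <= alpha * INR m1 * INR m2 ->
  Pb N lam beta alpha m1 < Pb N lam beta alpha m2.
Proof.
  intros HN Hlam Hbeta Halpha Hm1 Hdiv1 Hdiv2 Hm12 Hsum; unfold Pb.
  assert (HN0 : 0 < INR N) by (apply lt_0_INR; lia).
  assert (HA : 0 < INR m1) by (apply lt_0_INR, Hm1).
  assert (HAB : INR m1 < INR m2) by (apply lt_INR, Hm12).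
  assert (Ha1 := load_pos lam beta alpha m1 Hlam Hbeta Halpha Hm1).
  assert (Ha2 : 0 < load lam beta alpha m2) by (apply load_pos; auto; lia).
  assert (Hscaled := mul_load_le lam beta alpha m1 m2 Hlam Hbeta Halpha Hm1
                       (Nat.lt_le_incl _ _ Hm12) Hsum).
  apply erlangB_lt; try assumption.
  - apply INR_lt; rewrite INR_div_of_divide by (assumption || lia); simpl.
    apply Rdiv_lt_0_compat; lra.
  - apply INR_lt; rewrite !INR_div_of_divide by (assumption || lia).
    apply Rmult_lt_compat_l; [exact HN0|]. apply Rinv_lt_contravar; nra.
  - rewrite !INR_div_of_divide by (assumption || lia).
    unfold Rdiv; rewrite !Rmult_assoc, <- !Rinv_mult.
    apply Rmult_le_compat_l; [lra|].
    apply Rinv_le_contravar; [apply Rmult_lt_0_compat|]; assumption.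
Qed.

Lemma sum_le_mul_of_two_le A B alpha : 2 <= A -> 2 <= B -> 1 <= alpha ->
  A + B <= alpha * A * B.
Proof.
  intros HA HB Halpha.
  assert (1 <= (A - 1) * (B - 1)) by nra.
  assert (0 <= (alpha - 1) * (A * B)) by (apply Rmult_le_pos; nra).
  nra.
Qed.

Lemma INR_sum_le_mul m1 m2 alpha : 3 / 2 <= alpha -> (0 < m1)%nat -> (m1 < m2)%nat ->
  INR m1 + INR m2 <= alpha * INR m1 * INR m2.
Proof.
  intros Halpha Hm1 Hm12.
  assert (HB : 2 <= INR m2) by (apply (le_INR 2); lia).
  destruct (Nat.eq_dec m1 1) as [->|Hm1'].
  - simpl; nra.
  - apply sum_le_mul_of_two_le; [apply (le_INR 2); lia | exact HB | lra].
Qed.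

Theorem lemma1 (N : nat) (lam beta alpha : R) :
  (1 <= N)%nat -> 0 < lam -> 0 < beta -> 1 < alpha ->
  (3 / 2 <= alpha ->
     (forall m1 m2 : nat, (0 < m1)%nat -> Nat.divide m1 N -> Nat.divide m2 N ->
        (m1 < m2)%nat -> Pb N lam beta alpha m1 < Pb N lam beta alpha m2) /\
     (forall m : nat, (0 < m)%nat -> Nat.divide m N ->
        Pb N lam beta alpha 1 <= Pb N lam beta alpha m)) /\
  (alpha < 3 / 2 -> Nat.Even N ->
     forall m : nat, (0 < m)%nat -> Nat.divide m N ->
        Rmin (Pb N lam beta alpha 1) (Pb N lam beta alpha 2) <= Pb N lam beta alpha m).
Proof.
  intros HN Hlam Hbeta Halpha; split.
  - intros Halpha32.
    assert (Hmono : forall m1 m2 : nat, (0 < m1)%nat -> Nat.divide m1 N -> Nat.divide m2 N ->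
              (m1 < m2)%nat -> Pb N lam beta alpha m1 < Pb N lam beta alpha m2).
    { intros m1 m2 Hm1 Hdiv1 Hdiv2 Hm12.
      apply Pb_lt; try assumption. apply INR_sum_le_mul; assumption. }
    split; [exact Hmono|].
    intros m Hm Hdiv; destruct (Nat.eq_dec m 1) as [->|Hm1]; [apply Rle_refl|].
    left; apply Hmono; [lia | apply Nat.divide_1_l | exact Hdiv | lia].
  - intros _ [h Hh] m Hm Hdiv.
    destruct (Nat.eq_dec m 1) as [->|Hm1]; [apply Rmin_l|].
    destruct (Nat.eq_dec m 2) as [->|Hm2]; [apply Rmin_r|].
    apply Rle_trans with (Pb N lam beta alpha 2); [apply Rmin_r|].
    left; apply Pb_lt; try assumption; try lia.
    + exists h; lia.
    + apply sum_le_mul_of_two_le; [simpl; lra | apply (le_INR 2); lia | lra].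
Qed.
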